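(* Let $n_*>2$ be an integer, $\phi(b)=\upsilon\log b\,[\log\log b]^{1+\varepsilon}$ ($b\ge n_*+1$) with $\upsilon,\varepsilon>0$ such that $\phi(n_*+1)>1$, and $\mathsf{G}\in\mathbb{G}(n_*,\phi)$. Then for every $\theta>0$ there exists $a>0$ (possibly depending on $\theta,n_*,\upsilon,\varepsilon$) such that for every $x\in\mathsf{V}$ there exists $N_x\in\mathbb{N}$ with $$G_\theta(N,x):=\sum_{y\in\mathsf{S}(N,x)}[n(y)]^{1+\theta}\le\exp(aN)\quad\text{for all } N\ge N_x,$$ where $\mathsf{S}(N,x)=\{y\in\mathsf{V}:\rho(x,y)=N\}$.
   Context: $\mathsf{G}=(\mathsf{V},\mathsf{E})$ is a countable, connected, locally finite undirected graph; $n(x)$ is the degree, $\rho$ the path distance. For integer $n_*>2$, $\mathsf{V}_*=\{x:n(x)\le n_*\}$, $\mathsf{V}_*^c=\mathsf{V}\setminus\mathsf{V}_*$. For strictly increasing $\phi:(n_*,+\infty)\to(0,+\infty)$, $\mathbb{G}(n_*,\phi)$ is the family of graphs with $\rho(x,y)\ge\phi[\max\{n(x),n(y)\}]$ for all $x,y\in\mathsf{V}_*^c$. *)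

From HB Require Import structures.
From mathcomp Require Import all_boot all_order all_algebra.
From mathcomp Require Import all_classical all_reals all_analysis.

Set Implicit Arguments. Unset Strict Implicit. Unset Printing Implicit Defensive.
Import Order.TTheory GRing.Theory Num.Theory.
Local Open Scope ring_scope.

(* Local finiteness is built in:
   the neighbourhood of each vertex is a finite duplicate-free list. *)
Record lfgraph (V : countType) := LFGraph {
  nbrs : V -> seq V;
  nbrs_uniq : forall x, uniq (nbrs x);
  nbrs_irrefl : forall x, x \notin nbrs x;
  nbrs_sym : forall x y, (y \in nbrs x) = (x \in nbrs y);
  connected : forall x y : V,
    exists p : seq V, path (fun u v => v \in nbrs u) x p && (last x p == y)
}.

Section Graph.
Variables (V : countType) (G : lfgraph V).

Definition adj (u v : V) : bool := v \in nbrs G u.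
Local Open Scope nat_scope.

Definition deg (x : V) : nat := size (nbrs G x).

Fixpoint walk_len (x y : V) (n : nat) : bool :=
  match n with
  | 0 => x == y
  | n'.+1 => has (fun z => walk_len z y n') (nbrs G x)
  end.

Lemma walk_len_path (x : V) (p : seq V) :
  path adj x p -> walk_len x (last x p) (size p).
Proof.
elim: p x => [|z p IH] x /=; first by [].
move=> /andP[xz pz]; apply/hasP; exists z; first exact: xz.
exact: IH.
Qed.

Lemma walk_exists (x y : V) : exists n, walk_len x y n.
Proof.
have [p /andP[pp /eqP <-]] := connected G x y.
by exists (size p); apply: walk_len_path.
Qed.

Definition dist (x y : V) : nat := ex_minn (walk_exists x y).

Definition sphere (N : nat) (x : V) : set V := [set y | dist x y = N].

End Graph.

Definition in_GG (R : realType) (V : countType) (G : lfgraph V)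
  (nstar : nat) (phi : R -> R) : Prop :=
  forall x y : V, x <> y -> (nstar < deg G x)%N -> (nstar < deg G y)%N ->
    phi (maxn (deg G x) (deg G y))%:R <= (dist G x y)%:R.

Definition phi5 (R : realType) (ups eps : R) (b : R) : R :=
  ups * ln b * (ln (ln b)) `^ (1 + eps).

From mathcomp Require Import all_boot all_order all_algebra.
From mathcomp Require Import all_classical all_reals all_analysis.
From mathcomp Require Import ring lra.
Import Order.TTheory GRing.Theory Num.Theory.
Set Implicit Arguments. Unset Strict Implicit. Unset Printing Implicit Defensive.
Local Open Scope ring_scope.

(* Every vertex of the sphere S(N, x) ends a geodesic from x, and the
   geodesics of length N form a tree in which a vertex v has at most deg v
   children; weighting a geodesic by the product of 1/deg over its non-final
   vertices, the weights sum to at most 1.  It thus suffices to bound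
   deg(y)^(1+theta) times the product of the degrees along each geodesic
   ending at y by exp(aN).  On (n_*, oo) we have phi(b) >= c log b, so two
   distinct vertices of degree > n_* at distance d have degrees <= e^(d/c):
   along a geodesic the degree of each high-degree vertex is controlled by the
   distance to the next one, these distances add up to at most N + 1, and the
   last high-degree vertex is within N + O(1) of a fixed high-degree vertex.
   Vertices of degree <= n_* contribute at most n_*^(N+1). *)

Lemma ler_sum_uniq_map (R : numDomainType) (T : eqType) (U : Type)
    (s : seq T) (t : seq U) (g : U -> T) (f : T -> R) :
  uniq s -> {subset s <= map g t} -> (forall y, 0 <= f y) ->
  \sum_(y <- s) f y <= \sum_(p <- t) f (g p).
Proof.
elim: t s => [|p t IH] s s_uniq s_sub f_ge0.
  by case: s s_uniq s_sub => [|y s] _; [rewrite !big_nil | move/(_ y (mem_head _ _))].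
rewrite (bigID (pred1 (g p))) big_cons /= lerD //.
  case: (boolP (g p \in s)) => gps.
    by rewrite -big_filter filter_pred1_uniq // big_seq1.
  by rewrite big1_seq // => y /andP[/eqP -> ys]; rewrite ys in gps.
rewrite -big_filter; apply: IH => //; first exact: filter_uniq.
by move=> y; rewrite mem_filter => /andP[/negbTE ny /s_sub]; rewrite inE ny.
Qed.

Section Walks.
Variables (V : countType) (G : lfgraph V).
Implicit Types (x y z : V) (m n : nat).

Lemma walk_len_cat x y z m n :
  walk_len G x y m -> walk_len G y z n -> walk_len G x z (m + n).
Proof.
elim: m x => [|m IH] x /=; first by move/eqP->.
by move=> /hasP[w xw wy] yz; apply/hasP; exists w => //; apply: IH.
Qed.

Lemma walk_len1 x y : adj G x y -> walk_len G x y 1.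
Proof. by move=> xy; apply/hasP; exists y. Qed.

Lemma walk_lenSr x y n :
  walk_len G x y n.+1 -> exists2 z, walk_len G x z n & adj G z y.
Proof.
elim: n x => [|n IH] x /=; first by move=> /hasP[w xw /eqP <-]; exists x.
move=> /hasP[w xw /IH[z wz zy]]; exists z => //.
by apply/hasP; exists w.
Qed.

Lemma walk_len_nth x t i :
  path (adj G) x t -> (i < size t)%N -> walk_len G x (nth x t i) i.+1.
Proof.
elim: t x i => [|w t IH] x [|i] //= /andP[xw wt]; first by move=> _; apply: walk_len1.
rewrite ltnS => it; apply/hasP; exists w => //.
by rewrite (set_nth_default w) //; apply: IH.
Qed.

Lemma walk_len_dist x y : walk_len G x y (dist G x y).
Proof. by rewrite /dist; case: ex_minnP. Qed.

Lemma dist_le_walk x y n : walk_len G x y n -> (dist G x y <= n)%N.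
Proof. by rewrite /dist; case: ex_minnP => m _ /[apply]. Qed.

Lemma dist_triangle x y z : (dist G x z <= dist G x y + dist G y z)%N.
Proof. by apply/dist_le_walk/walk_len_cat; apply: walk_len_dist. Qed.

Lemma dist_adj_le x y z : adj G y z -> (dist G x z <= (dist G x y).+1)%N.
Proof.
by move=> yz; rewrite -addn1; apply/dist_le_walk/walk_len_cat/walk_len1/yz/walk_len_dist.
Qed.

End Walks.

Section Geodesics.
Variables (V : countType) (G : lfgraph V) (x : V).

(* The geodesics of length [N] from [x], each listed without its origin [x];
   grown one step at a time, they form a tree in which a vertex [v] has at
   most [deg G v] children. *)
Fixpoint geodesics (N : nat) : seq (seq V) :=
  if N is N'.+1 then
    flatten [seq [seq rcons p z | z <- nbrs G (last x p) & dist G x z == N]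
            | p <- geodesics N']
  else [:: [::]].

Lemma geodesicsP N p : p \in geodesics N ->
  [/\ path (adj G) x p, size p = N, uniq (x :: p)
    & {in x :: p, forall v, dist G x v <= N}%N].
Proof.
elim: N p => [|N IH] p /=.
  rewrite inE => /eqP -> /=; split=> // v; rewrite inE => /eqP ->.
  by apply: (@dist_le_walk _ G x x 0); rewrite /= eqxx.
move=> /flatten_mapP[q /IH[qP qN qU qD]] /mapP[z].
rewrite mem_filter => /andP[/eqP xz qz] ->.
have z_notin : z \notin x :: q by apply/negP => /qD; rewrite xz ltnn.
split.
- by rewrite rcons_path qP.
- by rewrite size_rcons qN.
- by change (uniq (x :: rcons q z)); rewrite -rcons_cons rcons_uniq z_notin qU.
- move=> v; rewrite -rcons_cons mem_rcons inE => /orP[/eqP -> | /qD /leqW //].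
  by rewrite xz.
Qed.

Lemma geodesics_cover N y :
  dist G x y = N -> exists2 p, p \in geodesics N & last x p = y.
Proof.
elim: N y => [|N IH] y xy.
  by move: (walk_len_dist G x y); rewrite xy /= => /eqP <-; exists [::]; rewrite ?inE.
have [z xz zy] : exists2 z, walk_len G x z N & adj G z y.
  by apply: walk_lenSr; rewrite -xy walk_len_dist.
have /IH[p p_geo p_last] : dist G x z = N.
  apply/eqP; rewrite eqn_leq dist_le_walk //= -ltnS -xy.
  exact: dist_adj_le.
exists (rcons p y); last by rewrite last_rcons.
apply/flatten_mapP; exists p => //; apply/mapP; exists y => //.
by rewrite mem_filter xy eqxx p_last.
Qed.

Definition posdeg (v : V) : nat := maxn 1 (deg G v).

Lemma sum_geodesics_weight (R : numFieldType) N :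
  \sum_(p <- geodesics N) \prod_(v <- belast x p) ((posdeg v)%:R : R)^-1 <= 1.
Proof.
elim: N => [|N IH] /=; first by rewrite big_seq1 big_nil.
apply: le_trans IH; rewrite big_flatten /= big_map; apply: ler_sum => p _.
rewrite big_map.
under eq_bigr do rewrite belast_rcons lastI big_rcons /=.
rewrite big_const_seq iter_addr_0 count_predT -[_ *+ _]mulr_natr -mulrA ler_piMr //.
  by apply: prodr_ge0 => v _; rewrite invr_ge0.
rewrite ler_pdivrMl ?ltr0n ?leq_maxl // mulr1 ler_nat size_filter.
exact: leq_trans (count_size _ _) (leq_maxr _ _).
Qed.

End Geodesics.

Lemma sphere_sum_le (R : numFieldType) (V : countType) (G : lfgraph V) (x : V) N
    (f : V -> R) (K : R) :
  (forall y, 0 <= f y) -> 0 <= K ->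
  (forall p, p \in geodesics G x N ->
     f (last x p) * \prod_(v <- belast x p) (posdeg G v)%:R <= K) ->
  \sum_(y \in sphere G N x) f y <= K.
Proof.
move=> f_ge0 K_ge0 fK.
apply: le_trans (ler_sum_uniq_map (t := geodesics G x N) (g := last x)
  (finite_support_uniq _ _ _) _ f_ge0) _.
  move=> y y_supp; suff /geodesics_cover[p p_geo <-] : dist G x y = N by exact: map_f.
  case: (pselect (finite_set (sphere G N x `&` f @^-1` [set~ 0]))) => fin.
    by move: y_supp; rewrite in_finite_support // inE => -[].
  by move: y_supp; rewrite no_finite_support.
apply: le_trans (_ : \sum_(p <- geodesics G x N)
    \prod_(v <- belast x p) (posdeg G v)%:R^-1 * K <= K).
  rewrite big_seq [leRHS]big_seq; apply: ler_sum => p p_geo.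
  have B_gt0 : 0 < \prod_(v <- belast x p) ((posdeg G v)%:R : R).
    by apply: prodr_gt0 => v _; rewrite ltr0n leq_maxl.
  by rewrite prodfV mulrC ler_pdivlMr // fK.
by rewrite -mulr_suml ler_piMl // sum_geodesics_weight.
Qed.

Lemma expR_ge1 (R : realType) (x : R) : 0 <= x -> 1 <= expR x.
Proof. by move=> x_ge0; rewrite leNgt expR_lt1 -leNgt. Qed.

Lemma powR_mulr_le (R : realType) (a b r : R) : 0 <= a -> 1 <= b -> 1 <= r ->
  a `^ r * b <= (b * a) `^ r.
Proof.
move=> a_ge0 b_ge1 r_ge1; have b_ge0 := le_trans ler01 b_ge1.
by rewrite powRM // mulrC ler_pM ?powR_ge0 ?le1r_powR.
Qed.

Section LogarithmicGap.
Variables (R : realType) (V : countType) (G : lfgraph V) (n : nat) (c : R).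
Hypotheses (n_gt0 : (0 < n)%N) (c_gt0 : 0 < c)
  (G_gap : in_GG G n (fun b => c * ln b)).

Let high : pred V := fun v => (n < deg G v)%N.

Let expR_dist_ge1 (k : nat) : 1 <= expR (k%:R / c).
Proof. by apply: expR_ge1; rewrite divr_ge0 // ltW. Qed.

Lemma maxn_deg_le_expR_dist u w : u != w -> high u -> high w ->
  (maxn (deg G u) (deg G w))%:R <= expR ((dist G u w)%:R / c).
Proof.
move=> /eqP uw hu hw; have := G_gap uw hu hw.
set m := maxn _ _ => le_m.
have m_gt0 : 0 < m%:R :> R.
  by rewrite ltr0n; apply: leq_trans (leq_maxl _ _); apply: leq_ltn_trans hu.
by rewrite -[leLHS]lnK ?posrE // ler_expR ler_pdivlMr // mulrC.
Qed.

Lemma deg_le_expR_find_high u t : path (adj G) u t -> u \notin t ->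
  high u -> has high t -> (deg G u)%:R <= expR ((find high t).+1%:R / c).
Proof.
move=> ut u_notin hu ht.
have r_lt : (find high t < size t)%N by rewrite -has_find.
have uw : u != nth u t (find high t).
  by apply: contraNneq u_notin => ->; apply: mem_nth.
apply: le_trans (le_trans _ (maxn_deg_le_expR_dist uw hu (nth_find u ht))) _.
  by rewrite ler_nat leq_maxl.
rewrite ler_expR ler_pM2r ?invr_gt0 // ler_nat.
exact/dist_le_walk/walk_len_nth.
Qed.

Let last_high_deg (s : seq V) : R := last 1 [seq (deg G v)%:R | v <- s & high v].

Let last_high_deg_ge0 s : 0 <= last_high_deg s.
Proof.
have := mem_last (1 : R) [seq (deg G v)%:R | v <- s & high v].
by rewrite inE /last_high_deg => /orP[/eqP -> | /mapP[v _ ->]].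
Qed.

(* Between two consecutive high-degree vertices of a path the first has degree
   at most [expR (gap / c)]; the gaps add up to at most the length of the path
   from its first high-degree vertex on, and the last degree is kept aside. *)
Lemma prod_high_deg_path u t : path (adj G) u t -> uniq (u :: t) ->
  \prod_(v <- u :: t | high v) (deg G v)%:R
    <= expR ((size (u :: t) - find high (u :: t))%:R / c) * last_high_deg (u :: t).
Proof.
elim: t u => [|w t IH] u.
  move=> _ _; rewrite big_cons big_nil /last_high_deg /=.
  case: (high u) => /=; last by rewrite subnn mul0r expR0 mulr1.
  by rewrite mulr1 mulrC ler_peMr ?ler0n.
move=> ut /andP[u_notin wt_uniq]; have {IH wt_uniq} := IH w (path_sorted ut) wt_uniq.
move: (w :: t) ut u_notin => s us u_notin IH.
rewrite big_cons /last_high_deg [seq.filter _ (u :: s)]/=; case hu: (high u); last first.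
  by have -> : (size (u :: s) - find high (u :: s) = size s - find high s)%N
    by rewrite /= hu subSS.
have -> : (size (u :: s) - find high (u :: s) = (size s).+1)%N by rewrite /= hu.
rewrite map_cons last_cons.
case hs: (has high s).
  have r_lt : (find high s < size s)%N by rewrite -has_find.
  have -> : last (deg G u)%:R [seq (deg G v)%:R | v <- s & high v] = last_high_deg s.
    by move: hs; rewrite has_filter /last_high_deg; case: [seq v <- s | high v].
  rewrite -(subnKC (ltnW r_lt)) -addSn natrD mulrDl expRD -mulrA.
  apply: ler_pM (deg_le_expR_find_high us u_notin hu hs) IH => //.
  exact: prodr_ge0.
have -> : \prod_(v <- s | high v) (deg G v)%:R = 1 :> R.
  by rewrite big1_seq // => v /andP[hv vs]; move/hasPn: hs => /(_ v vs); rewrite hv.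
have -> : seq.filter high s = [::] by move: hs; rewrite has_filter => /negbFE/eqP.
by rewrite /= mulr1 ler_peMl.
Qed.

Lemma high_deg_ball_le x : exists2 C : R, 1 <= C &
  forall N v, high v -> (dist G x v <= N)%N -> (deg G v)%:R <= C * expR (N%:R / c).
Proof.
have [[h hh]|no_high] := pselect (exists h, high h); last first.
  by exists 1 => // N v hv; case: no_high; exists v.
have deg_h_ge1 : 1 <= (deg G h)%:R :> R by rewrite ler1n; apply: leq_ltn_trans hh.
exists (expR ((dist G h x)%:R / c) * (deg G h)%:R).
  exact: mulr_ege1.
move=> N v hv xv; case: (eqVneq h v) => [<- | hv'].
  by rewrite mulrAC ler_peMl ?mulr_ege1.
apply: le_trans (le_trans _ (maxn_deg_le_expR_dist hv' hh hv)) _.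
  by rewrite ler_nat leq_maxr.
rewrite mulrAC -expRD -mulrDl; apply: le_trans (ler_peMr (expR_ge0 _) deg_h_ge1).
rewrite ler_expR ler_pM2r ?invr_gt0 // -natrD ler_nat.
by rewrite (leq_trans (dist_triangle G h x v)) ?leq_add2l.
Qed.

Lemma last_high_deg_le x N (C : R) (s : seq V) : 1 <= C ->
  (forall v, high v -> (dist G x v <= N)%N -> (deg G v)%:R <= C * expR (N%:R / c)) ->
  {in s, forall v, dist G x v <= N}%N -> last_high_deg s <= C * expR (N%:R / c).
Proof.
move=> C_ge1 ball s_ball; have := mem_last (1 : R) [seq (deg G v)%:R | v <- s & high v].
rewrite inE /last_high_deg => /orP[/eqP -> | /mapP[v]].
  by rewrite mulr_ege1.
by rewrite mem_filter => /andP[hv vs] ->; apply: ball => //; apply: s_ball.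
Qed.

Lemma prod_posdeg_geodesic x N (C : R) p : 1 <= C ->
  (forall v, high v -> (dist G x v <= N)%N -> (deg G v)%:R <= C * expR (N%:R / c)) ->
  p \in geodesics G x N ->
  \prod_(v <- x :: p) (posdeg G v)%:R <= C * expR (N.+1%:R * (ln n%:R + 2 / c)).
Proof.
move=> C_ge1 ball /geodesicsP[xp pN xp_uniq xp_ball].
have n_ge1 : 1 <= n%:R :> R by rewrite ler1n.
have low : \prod_(v <- x :: p | ~~ high v) (posdeg G v)%:R <= n%:R ^+ N.+1 :> R.
  rewrite big_mkcond; apply: le_trans (_ : _ <= \prod_(v <- x :: p) n%:R) _.
    apply: ler_prod => v _; case: ifP => [lo|_]; last by rewrite ler01.
    by rewrite ler0n ler_nat geq_max n_gt0 leqNgt lo.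
  by rewrite big_const_seq iter_mulr_1 count_predT /= pN.
rewrite (bigID high) /=.
have -> : \prod_(v <- x :: p | high v) (posdeg G v)%:R
          = \prod_(v <- x :: p | high v) (deg G v)%:R :> R.
  by apply: eq_bigr => v hv; congr _%:R; apply/maxn_idPr; apply: leq_ltn_trans hv.
have span : expR ((size (x :: p) - find high (x :: p))%:R / c) <= expR (N.+1%:R / c).
  by rewrite ler_expR ler_pM2r ?invr_gt0 // ler_nat /= pN leq_subr.
have two_steps : expR (N.+1%:R / c) * expR (N%:R / c) <= expR (N.+1%:R * (2 / c)).
  rewrite -expRD ler_expR -mulrDl mulrA ler_pM2r ?invr_gt0 // -natrD -natrM ler_nat.
  by rewrite muln2 -addnn leq_add2l.
apply: le_trans (ler_pM _ _ (le_trans (prod_high_deg_path xp xp_uniq)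
  (ler_pM _ _ span (last_high_deg_le C_ge1 ball xp_ball))) low) _.
- exact: prodr_ge0.
- exact: prodr_ge0.
- exact: expR_ge0.
- exact: last_high_deg_ge0.
rewrite mulrDr expRD expRM_natl lnK ?posrE ?ltr0n //.
rewrite [leLHS](_ : _ = C * (n%:R ^+ N.+1 * (expR (N.+1%:R / c) * expR (N%:R / c))));
  last by ring.
by rewrite !ler_pM2l ?exprn_gt0 ?(lt_le_trans ltr01 C_ge1) ?(lt_le_trans ltr01 n_ge1).
Qed.

Theorem sphere_sum_powR_deg_le theta x : 0 < theta ->
  exists Nx : nat, forall N : nat, (Nx <= N)%N ->
    \sum_(y \in sphere G N x) (deg G y)%:R `^ (1 + theta)
      <= expR ((1 + theta) * (ln n%:R + 2 / c + 1) * N%:R).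
Proof.
move=> theta_gt0; have [C C_ge1 ball] := high_deg_ball_le x.
set k := ln n%:R + 2 / c.
have k_ge0 : 0 <= k by rewrite addr_ge0 ?ln_ge0 ?ler1n // divr_ge0 // ltW.
have r_ge1 : 1 <= 1 + theta by rewrite lerDl ltW.
exists (Num.Def.archi_bound (ln C + k)) => N le_N.
have N_large : ln C + k <= N%:R.
  apply/ltW/(lt_le_trans (archi_boundP _)); last by rewrite ler_nat.
  by rewrite addr_ge0 // ln_ge0.
apply: sphere_sum_le => [y | | p p_geo]; [exact: powR_ge0 | exact: expR_ge0 |].
have := prod_posdeg_geodesic C_ge1 (ball N) p_geo.
rewrite lastI big_rcons /=; set B := \prod_(v <- belast x p) _ => P_le.
have B_ge1 : 1 <= B.
  by apply: (big_ind (fun b : R => 1 <= b)) => // [? ? | v _];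
    [exact: mulr_ege1 | rewrite ler1n leq_maxl].
apply: le_trans (ler_wpM2r (le_trans ler01 B_ge1)
  (_ : _ <= (posdeg G (last x p))%:R `^ (1 + theta))) _.
  by rewrite ge0_ler_powR ?nnegrE ?ler0n ?ler_nat ?leq_maxr // (le_trans ler01).
apply: le_trans (powR_mulr_le (ler0n _ _) B_ge1 r_ge1) _.
apply: le_trans (ge0_ler_powR (le_trans ler01 r_ge1) _ _ P_le) _.
- by rewrite nnegrE mulr_ge0 // (le_trans ler01).
- by rewrite nnegrE mulr_ge0 ?expR_ge0 // (le_trans ler01).
rewrite -[C]lnK ?posrE ?(lt_le_trans ltr01) // -expRD -expRM ler_expR.
rewrite mulrC -!mulrA ler_pM2l ?(lt_le_trans ltr01) //.
by rewrite -/k -addn1 natrD; nra.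
Qed.

End LogarithmicGap.

Lemma in_GG_le (R : realType) (V : countType) (G : lfgraph V) n (phi psi : R -> R) :
  (forall b : nat, (n < b)%N -> psi b%:R <= phi b%:R) ->
  in_GG G n phi -> in_GG G n psi.
Proof.
move=> psi_le G_phi x y xy hx hy; apply: le_trans (G_phi x y xy hx hy).
by apply: psi_le; apply: leq_trans hx (leq_maxl _ _).
Qed.

Lemma expR1_lt4 (R : realType) : expR 1 < 4 :> R.
Proof.
have -> : expR 1 = expR (2^-1) ^+ 2 :> R by rewrite -expRM_natl mulfV ?pnatr_eq0.
have := @expR_gt1Dx R (- 2^-1); rewrite oppr_eq0 invr_eq0 pnatr_eq0 => /(_ isT).
have := expRxMexpNx_1 (2^-1 : R); have := expR_gt0 (2^-1 : R).
set a := expR 2^-1; set b := expR (- 2^-1).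
by nra.
Qed.

Lemma ln_nat_gt1 (R : realType) (m : nat) : (3 < m)%N -> 1 < ln m%:R :> R.
Proof.
move=> m_gt3; have m_gt0 : (0 < m)%N by apply: leq_trans m_gt3.
rewrite -ltr_expR lnK ?posrE ?ltr0n //.
by apply: lt_le_trans (expR1_lt4 R) _; rewrite ler_nat.
Qed.

Lemma phi5_ge_ln (R : realType) (ups eps b0 b : R) :
  0 <= ups -> 0 <= 1 + eps -> 1 < ln b0 -> b0 <= b ->
  ups * ln (ln b0) `^ (1 + eps) * ln b <= phi5 ups eps b.
Proof.
move=> ups_ge0 eps_ge0 lnb0_gt1 b0_le_b.
have b0_gt0 : 0 < b0.
  by rewrite ltNge; apply/negP => /ln0 lnb0; rewrite lnb0 ltr10 in lnb0_gt1.
have lnb0_le : ln b0 <= ln b by rewrite ler_ln ?posrE // (lt_le_trans b0_gt0).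
have lnb0_gt0 := lt_trans ltr01 lnb0_gt1.
rewrite /phi5 [leLHS]mulrAC; apply: ler_wpM2l.
  by rewrite mulr_ge0 // (le_trans (ltW lnb0_gt0)).
apply: ge0_ler_powR; rewrite ?nnegrE ?ln_ge0 ?(le_trans (ltW lnb0_gt1)) //.
by rewrite ler_ln ?posrE ?(lt_le_trans lnb0_gt0).
Qed.

Theorem lemma5p4 (R : realType) (nstar : nat) (ups eps : R) :
  (2 < nstar)%N -> 0 < ups -> 0 < eps ->
  1 < phi5 ups eps (nstar.+1)%:R ->
  forall theta : R, 0 < theta ->
  exists a : R, 0 < a /\
    forall (V : countType) (G : lfgraph V),
      in_GG G nstar (phi5 ups eps) ->
      forall x : V, exists Nx : nat, forall N : nat, (Nx <= N)%N ->
        \sum_(y \in sphere G N x) ((deg G y)%:R `^ (1 + theta)) <= expR (a * N%:R).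
Proof.
move=> nstar_gt2 ups_gt0 eps_gt0 _ theta theta_gt0.
have lnb0_gt1 : 1 < ln (nstar.+1)%:R :> R by apply: ln_nat_gt1.
set c := ups * ln (ln (nstar.+1)%:R) `^ (1 + eps).
have c_gt0 : 0 < c by rewrite mulr_gt0 ?powR_gt0 ?ln_gt0.
have nstar_gt0 : (0 < nstar)%N by apply: leq_trans nstar_gt2.
exists ((1 + theta) * (ln nstar%:R + 2 / c + 1)); split.
  by rewrite mulr_gt0 ?ltr_wpDl ?addr_ge0 ?ln_ge0 ?ler1n ?divr_ge0 ?ltW.
move=> V G G_phi x.
have G_log : in_GG G nstar (fun b => c * ln b).
  apply: in_GG_le G_phi => b b_gt.
  by apply: phi5_ge_ln; rewrite ?ler_nat ?addr_ge0 // ltW.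
exact: sphere_sum_powR_deg_le.
Qed.
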